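(* For every positive integer $k$, $\theta\in[0,\pi]$, $s_4>0$ and $s_5\ge0$, the function $\frac{H-1}{\sqrt{-Q}}$ is monotonically non-increasing along $\xi(k,\theta,s_4,s_5)$ as long as the integral curve lies in $\mathcal B$.
   Context: Fix an integer $m\ge1$, $n=4m+3$. On $\mathbb R^8$ with coordinates $(X_1,X_2,X_3,Z_1,Z_2,Z_3,Z_4,W)$ set $G=X_1^2+2X_2^2+4mX_3^2$, $H=X_1+2X_2+4mX_3$, $R_1=2Z_1Z_2+4mZ_1Z_3$, $R_2=4Z_2-2Z_1Z_2+4mZ_3$, $R_3=(4m+8)Z_4-2Z_1Z_3-4Z_3$, $R_s=R_1+2R_2+4mR_3$, $Q=G+R_s+(n-1)\frac\epsilon2W-1$, and consider, for $\epsilon\in\{0,1\}$, the system $X_i'=X_i(G-\frac\epsilon2W-1)+R_i+\frac\epsilon2W$ ($i=1,2,3$), $Z_1'=2Z_1(X_1-X_2)$, $Z_2'=2Z_2(G-\frac\epsilon2W-X_2)$, $Z_3'=2Z_3(G-\frac\epsilon2W+X_2-2X_3)$, $Z_4'=2Z_4(G-\frac\epsilon2W-X_3)$, $W'=2W(G-\frac\epsilon2W)$. $\mathcal{RS}=\{Q\le0\}\cap\{H\le1\}\cap\{W\ge0\}\cap\{Z_1,Z_2,Z_3,Z_4\ge0\}\cap\{Z_4^2=Z_2Z_3\}$; $\mathcal B=\mathcal{RS}\cap\{1-Z_1\ge0\}\cap\{X_1-X_2\ge0\}\cap\{Z_2-Z_3\ge0\}\cap\{2(\sqrt{Z_2}-\sqrt{Z_3})+X_3-X_2\ge0\}\cap\{X_1,X_2,X_3\ge0\}$.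 Let $p_0=(1,0,0,0,0,0,0,0)$, $w_1=(-(4m+2)(2m+2),2m+2,2m+2,0,1,1,1,0)$, $w_2=(-4,2,0,0,1,0,0,0)$, $w_3=(-4(m+1)^2\sqrt2,2\sqrt2,(m+2)\sqrt2,0,\sqrt2,0,\tfrac{\sqrt2}{2},0)$, $w_4=(-1,0,\dots,0)$, $w_5=(-(4m+2)\frac\epsilon2,\frac\epsilon2,\frac\epsilon2,0,0,0,0,2)$, $w_6=(0,0,0,1,0,0,0,0)$, $w(\theta,k)=\frac{1+\cos\theta}{2}w_1+\frac{1-\cos\theta}{2}w_2+\frac{\sin\theta}{\sqrt2}w_3+k^2(1+\sin\theta)w_6$. $\xi(k,\theta,s_4,s_5)$ is the maximal integral curve with $\xi(\eta)=p_0+e^{2\eta}(w(\theta,k)+s_4w_4+s_5w_5)+O(e^{(2+\delta)\eta})$ as $\eta\to-\infty$ for some $\delta>0$, with $\epsilon=1$ if $s_5>0$ and $\epsilon=0$ if $s_5=0$. (Along such a curve with $s_4>0$, $Q<0$.) *)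

From Stdlib Require Import Reals.
From Coquelicot Require Import Coquelicot.
Open Scope R_scope.

Record pt := mkpt { X1 : R; X2 : R; X3 : R; Z1 : R; Z2 : R; Z3 : R; Z4 : R; W : R }.

Definition coord (i : nat) (p : pt) : R :=
  match i with
  | 0%nat => X1 p | 1%nat => X2 p | 2%nat => X3 p | 3%nat => Z1 p
  | 4%nat => Z2 p | 5%nat => Z3 p | 6%nat => Z4 p | _ => W p
  end.

Definition padd (p q : pt) : pt :=
  mkpt (X1 p + X1 q) (X2 p + X2 q) (X3 p + X3 q) (Z1 p + Z1 q)
       (Z2 p + Z2 q) (Z3 p + Z3 q) (Z4 p + Z4 q) (W p + W q).
Definition pscale (a : R) (p : pt) : pt :=
  mkpt (a * X1 p) (a * X2 p) (a * X3 p) (a * Z1 p)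
       (a * Z2 p) (a * Z3 p) (a * Z4 p) (a * W p).

Section Sys.
Variable m : nat.
Variable eps : R.     (* epsilon in {0,1} *)
Let M4 : R := 4 * INR m.
Let n : R := 4 * INR m + 3.

Definition Gf (p : pt) : R := X1 p ^ 2 + 2 * X2 p ^ 2 + M4 * X3 p ^ 2.
Definition Hf (p : pt) : R := X1 p + 2 * X2 p + M4 * X3 p.
Definition R1f (p : pt) : R := 2 * Z1 p * Z2 p + M4 * Z1 p * Z3 p.
Definition R2f (p : pt) : R := 4 * Z2 p - 2 * Z1 p * Z2 p + M4 * Z3 p.
Definition R3f (p : pt) : R := (M4 + 8) * Z4 p - 2 * Z1 p * Z3 p - 4 * Z3 p.
Definition Rsf (p : pt) : R := R1f p + 2 * R2f p + M4 * R3f p.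
Definition Qf (p : pt) : R := Gf p + Rsf p + (n - 1) * (eps / 2) * W p - 1.

Definition vf (p : pt) : pt :=
  let g := Gf p - eps / 2 * W p in
  mkpt (X1 p * (g - 1) + R1f p + eps / 2 * W p)
       (X2 p * (g - 1) + R2f p + eps / 2 * W p)
       (X3 p * (g - 1) + R3f p + eps / 2 * W p)
       (2 * Z1 p * (X1 p - X2 p))
       (2 * Z2 p * (g - X2 p))
       (2 * Z3 p * (g + X2 p - 2 * X3 p))
       (2 * Z4 p * (g - X3 p))
       (2 * W p * g).

Definition inRS (p : pt) : Prop :=
  Qf p <= 0 /\ Hf p <= 1 /\ 0 <= W p /\
  0 <= Z1 p /\ 0 <= Z2 p /\ 0 <= Z3 p /\ 0 <= Z4 p /\
  Z4 p ^ 2 = Z2 p * Z3 p.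

Definition inB (p : pt) : Prop :=
  inRS p /\ 0 <= 1 - Z1 p /\ 0 <= X1 p - X2 p /\ 0 <= Z2 p - Z3 p /\
  0 <= 2 * (sqrt (Z2 p) - sqrt (Z3 p)) + X3 p - X2 p /\
  0 <= X1 p /\ 0 <= X2 p /\ 0 <= X3 p.

Definition monf (p : pt) : R := (Hf p - 1) / sqrt (- Qf p).

Definition integral_curve (xi : R -> pt) (T : Rbar) : Prop :=
  forall t : R, Rbar_lt t T -> forall i : nat, (i < 8)%nat ->
    is_derive (fun s => coord i (xi s)) t (coord i (vf (xi t))).

Definition maximal_integral_curve (xi : R -> pt) (T : Rbar) : Prop :=
  integral_curve xi T /\
  forall (xi' : R -> pt) (T' : Rbar),
    integral_curve xi' T' -> Rbar_le T T' ->
    (forall t : R, Rbar_lt t T -> xi' t = xi t) -> T' = T.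

Definition asymptotic_to (xi : R -> pt) (T : Rbar) (p0 v : pt) : Prop :=
  exists delta C eta0 : R, 0 < delta /\ Rbar_lt eta0 T /\
    forall eta : R, eta <= eta0 -> forall i : nat, (i < 8)%nat ->
      Rabs (coord i (xi eta) - coord i (padd p0 (pscale (exp (2 * eta)) v)))
        <= C * exp ((2 + delta) * eta).
End Sys.

Definition epsof (s5 : R) : R := if Rlt_dec 0 s5 then 1 else 0.

Definition p0 : pt := mkpt 1 0 0 0 0 0 0 0.
Definition w1 (m : nat) : pt :=
  mkpt (- (4 * INR m + 2) * (2 * INR m + 2)) (2 * INR m + 2) (2 * INR m + 2) 0 1 1 1 0.
Definition w2 : pt := mkpt (-4) 2 0 0 1 0 0 0.
Definition w3 (m : nat) : pt :=
  mkpt (- 4 * (INR m + 1) ^ 2 * sqrt 2) (2 * sqrt 2) ((INR m + 2) * sqrt 2)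
       0 (sqrt 2) 0 (sqrt 2 / 2) 0.
Definition w4 : pt := mkpt (-1) 0 0 0 0 0 0 0.
Definition w5 (m : nat) (eps : R) : pt :=
  mkpt (- (4 * INR m + 2) * (eps / 2)) (eps / 2) (eps / 2) 0 0 0 0 2.
Definition w6 : pt := mkpt 0 0 0 1 0 0 0 0.

Definition wtk (m : nat) (theta k : R) : pt :=
  padd (pscale ((1 + cos theta) / 2) (w1 m))
  (padd (pscale ((1 - cos theta) / 2) w2)
  (padd (pscale (sin theta / sqrt 2) (w3 m))
        (pscale (k ^ 2 * (1 + sin theta)) w6))).

Definition is_xi (m : nat) (k theta s4 s5 : R) (xi : R -> pt) (T : Rbar) : Prop :=
  let eps := epsof s5 in
  maximal_integral_curve m eps xi T /\
  asymptotic_to xi T p0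
    (padd (wtk m theta k) (padd (pscale s4 w4) (pscale s5 (w5 m eps)))).

From Stdlib Require Import Reals Lra Lia.
From Coquelicot Require Import Coquelicot.
Open Scope R_scope.

(* Let K := Q - (H - 1) (1 + eps W / 2).  Along the flow,
   K' = c K + (H - 1) (1 - eps W / 2) G for a continuous c, and in B the
   forcing term is <= 0 (H <= 1, G >= 0, and Q <= 0 forces eps W / 2 <= 1),
   so by an integrating factor K stays negative once it is negative.  As
   eta -> -oo, K (xi eta) = - s4 e^(2 eta) + o (e^(2 eta)), because the
   linearisation of K at p0 vanishes on w1, w2, w3, w5, w6 and is -1 on w4;
   hence K < 0 on the part of the curve lying in B.  Finally the derivative of
   (H - 1) / sqrt (- Q) is (- Q K - (eps W / 2) (H - 1) (Q - (H - 1))) / (- Q)^(3/2),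
   and both terms of the numerator are <= 0 when K < 0 and H <= 1. *)

Lemma nonincreasing_of_derive_nonpos (f df : R -> R) (a b : R) :
  a <= b ->
  (forall t, a <= t <= b -> is_derive f t (df t)) ->
  (forall t, a <= t <= b -> df t <= 0) -> f b <= f a.
Proof.
  intros Hab Hf Hdf.
  destruct (MVT_gen f a b df) as [c [Hc Hmvt]].
  - intros x Hx. rewrite Rmin_left, Rmax_right in Hx by lra. apply Hf; lra.
  - intros x Hx. rewrite Rmin_left, Rmax_right in Hx by lra.
    apply continuity_pt_filterlim, (ex_derive_continuous (V := R_NormedModule)).
    exists (df x). apply Hf; lra.
  - rewrite Rmin_left, Rmax_right in Hc by lra.
    specialize (Hdf c Hc). nra.
Qed.

Lemma is_derive_eq (f : R -> R) (x a b : R) : is_derive f x a -> a = b -> is_derive f x b.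
Proof. now intros H <-. Qed.

Lemma is_derive_Rconst (c x : R) : is_derive (fun _ => c) x 0.
Proof. apply (is_derive_const c x). Qed.

Lemma is_derive_Rplus (f g : R -> R) (x a b : R) :
  is_derive f x a -> is_derive g x b -> is_derive (fun s => f s + g s) x (a + b).
Proof. apply (is_derive_plus f g). Qed.

Lemma is_derive_Rminus (f g : R -> R) (x a b : R) :
  is_derive f x a -> is_derive g x b -> is_derive (fun s => f s - g s) x (a - b).
Proof. apply (is_derive_minus f g). Qed.

Lemma is_derive_Ropp (f : R -> R) (x a : R) :
  is_derive f x a -> is_derive (fun s => - f s) x (- a).
Proof. apply (is_derive_opp f). Qed.

Lemma is_derive_Rmult (f g : R -> R) (x a b : R) :
  is_derive f x a -> is_derive g x b -> is_derive (fun s => f s * g s) x (a * g x + f x * b).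
Proof. intros Hf Hg. apply (is_derive_mult f g); [exact Hf | exact Hg | apply Rmult_comm]. Qed.

Lemma is_derive_Rsqr (f : R -> R) (x a : R) :
  is_derive f x a -> is_derive (fun s => f s ^ 2) x (2 * a * f x).
Proof. intros Hf. eapply is_derive_eq; [apply (is_derive_pow f 2 x a Hf) | simpl; ring]. Qed.

Lemma linear_ode_preserves_neg (K c r : R -> R) (T : Rbar) (a b : R) :
  a <= b -> Rbar_lt b T ->
  (forall t : R, Rbar_lt t T -> is_derive K t (K t * c t + r t)) ->
  (forall t : R, Rbar_lt t T -> continuous c t) ->
  (forall t, a <= t <= b -> r t <= 0) -> K a < 0 -> K b < 0.
Proof.
  intros Hab HbT HK Hc Hr Ha.
  assert (below_b : forall t, t <= b -> Rbar_lt t T).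
  { intros t Ht. apply Rbar_le_lt_trans with b; [exact Ht | exact HbT]. }
  set (I u := RInt c a u).
  assert (HI : forall t : R, Rbar_lt t T -> is_derive I t (c t)).
  { intros t Ht. apply (is_derive_RInt c I a); [| exact (Hc t Ht)].
    apply (@locally_open R_UniformSpace (fun u : R => Rbar_lt u T));
      [apply open_Rbar_lt | | exact Ht].
    intros u Hu. apply (RInt_correct (V := R_CompleteNormedModule)).
    apply (ex_RInt_continuous (V := R_CompleteNormedModule)).
    intros z Hz. apply Hc, Rbar_le_lt_trans with (Rmax a u); [apply Hz |].
    unfold Rmax; destruct Rle_dec; [exact Hu | apply below_b; lra]. }
  (* integrating factor: [(K exp (- I))' = r exp (- I) <= 0] *)
  set (L u := K u * exp (- I u)).
  assert (HL : L b <= L a).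
  { apply (nonincreasing_of_derive_nonpos L (fun u => r u * exp (- I u))); [exact Hab | |].
    - intros t Ht. eapply is_derive_eq.
      + eapply is_derive_Rmult; [apply HK, below_b; lra |].
        apply (is_derive_comp exp (fun u => - I u)); [apply is_derive_exp |].
        apply is_derive_Ropp, HI, below_b; lra.
      + unfold scal; simpl; unfold mult; simpl. ring.
    - intros t Ht. assert (0 < exp (- I t)) by apply exp_pos. specialize (Hr t Ht). nra. }
  unfold L in HL.
  assert (0 < exp (- I a)) by apply exp_pos. assert (0 < exp (- I b)) by apply exp_pos.
  nra.
Qed.

Definition psub (p q : pt) : pt :=
  mkpt (X1 p - X1 q) (X2 p - X2 q) (X3 p - X3 q) (Z1 p - Z1 q)
       (Z2 p - Z2 q) (Z3 p - Z3 q) (Z4 p - Z4 q) (W p - W q).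

Definition pnorm (p : pt) : R :=
  Rabs (X1 p) + Rabs (X2 p) + Rabs (X3 p) + Rabs (Z1 p)
  + Rabs (Z2 p) + Rabs (Z3 p) + Rabs (Z4 p) + Rabs (W p).

Lemma coord_psub (i : nat) (p q : pt) : coord i (psub p q) = coord i p - coord i q.
Proof. now destruct i as [|[|[|[|[|[|[|i]]]]]]]. Qed.

Lemma psub_padd_split (p q r : pt) : psub p q = padd r (psub p (padd q r)).
Proof. unfold psub, padd; cbn [X1 X2 X3 Z1 Z2 Z3 Z4 W]; f_equal; ring. Qed.

Lemma pnorm_nonneg (p : pt) : 0 <= pnorm p.
Proof.
  unfold pnorm.
  pose proof (Rabs_pos (X1 p)); pose proof (Rabs_pos (X2 p)); pose proof (Rabs_pos (X3 p));
  pose proof (Rabs_pos (Z1 p)); pose proof (Rabs_pos (Z2 p)); pose proof (Rabs_pos (Z3 p));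
  pose proof (Rabs_pos (Z4 p)); pose proof (Rabs_pos (W p)). lra.
Qed.

Lemma Rabs_coord_le_pnorm (i : nat) (p : pt) : Rabs (coord i p) <= pnorm p.
Proof.
  unfold pnorm.
  pose proof (Rabs_pos (X1 p)); pose proof (Rabs_pos (X2 p)); pose proof (Rabs_pos (X3 p));
  pose proof (Rabs_pos (Z1 p)); pose proof (Rabs_pos (Z2 p)); pose proof (Rabs_pos (Z3 p));
  pose proof (Rabs_pos (Z4 p)); pose proof (Rabs_pos (W p)).
  destruct i as [|[|[|[|[|[|[|i]]]]]]]; cbn [coord]; lra.
Qed.

Lemma Rabs_coord_mul_le_pnorm (i j : nat) (p : pt) :
  Rabs (coord i p * coord j p) <= pnorm p ^ 2.
Proof.
  rewrite Rabs_mult; replace (pnorm p ^ 2) with (pnorm p * pnorm p) by ring.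
  apply Rmult_le_compat; [apply Rabs_pos | apply Rabs_pos | apply Rabs_coord_le_pnorm ..].
Qed.

Lemma pnorm_le_of_coord_bound (p : pt) (E : R) :
  (forall i, (i < 8)%nat -> Rabs (coord i p) <= E) -> pnorm p <= 8 * E.
Proof.
  intros HE. unfold pnorm.
  pose proof (HE 0%nat ltac:(lia)); pose proof (HE 1%nat ltac:(lia));
  pose proof (HE 2%nat ltac:(lia)); pose proof (HE 3%nat ltac:(lia));
  pose proof (HE 4%nat ltac:(lia)); pose proof (HE 5%nat ltac:(lia));
  pose proof (HE 6%nat ltac:(lia)); pose proof (HE 7%nat ltac:(lia)).
  cbn [coord] in *. lra.
Qed.

Lemma pnorm_padd_le (p q : pt) : pnorm (padd p q) <= pnorm p + pnorm q.
Proof.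
  unfold pnorm, padd; cbn [X1 X2 X3 Z1 Z2 Z3 Z4 W].
  pose proof (Rabs_triang (X1 p) (X1 q)); pose proof (Rabs_triang (X2 p) (X2 q));
  pose proof (Rabs_triang (X3 p) (X3 q)); pose proof (Rabs_triang (Z1 p) (Z1 q));
  pose proof (Rabs_triang (Z2 p) (Z2 q)); pose proof (Rabs_triang (Z3 p) (Z3 q));
  pose proof (Rabs_triang (Z4 p) (Z4 q)); pose proof (Rabs_triang (W p) (W q)). lra.
Qed.

Lemma pnorm_pscale (c : R) (p : pt) : pnorm (pscale c p) = Rabs c * pnorm p.
Proof. unfold pnorm, pscale; cbn [X1 X2 X3 Z1 Z2 Z3 Z4 W]. rewrite !Rabs_mult. ring. Qed.

Lemma Rmult_le_Rabs_bound (c x N : R) : Rabs x <= N -> c * x <= Rabs c * N.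
Proof.
  intros Hx. eapply Rle_trans; [apply Rle_abs |].
  rewrite Rabs_mult. apply Rmult_le_compat_l; [apply Rabs_pos | exact Hx].
Qed.

Lemma exp_le_one (x : R) : x <= 0 -> exp x <= 1.
Proof.
  intros Hx. rewrite <- exp_0.
  destruct (Rle_lt_or_eq_dec x 0 Hx) as [Hlt | ->]; [left; apply exp_increasing, Hlt | lra].
Qed.

Lemma exp_eventually_small (a B eps : R) : 0 < a -> 0 < eps ->
  exists eta1, forall eta, eta <= eta1 -> B * exp (a * eta) < eps.
Proof.
  intros Ha Heps.
  set (bound := eps / (Rabs B + 1)).
  assert (Hb : 0 < bound) by (apply Rdiv_lt_0_compat; pose proof (Rabs_pos B); lra).
  exists (ln bound / a - 1). intros eta Heta.
  assert (Hexp : exp (a * eta) < bound).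
  { rewrite <- (exp_ln bound Hb). apply exp_increasing.
    apply Rmult_le_compat_l with (r := a) in Heta; [| lra].
    replace (a * (ln bound / a - 1)) with (ln bound - a) in Heta by (field; lra). lra. }
  assert (Hbe : Rabs B * bound < eps) by (unfold bound; pose proof (Rabs_pos B);
    apply (Rmult_lt_reg_r (Rabs B + 1)); [lra |]; field_simplify; lra).
  pose proof (Rle_abs B). pose proof (Rabs_pos B). pose proof (exp_pos (a * eta)). nra.
Qed.

Section Flow.
Variables (m : nat) (e : R).

Definition gf (p : pt) : R := Gf m p - e / 2 * W p.
Definition Kf (p : pt) : R := Qf m e p - (Hf m p - 1) * (1 + e / 2 * W p).
Definition Kcoef (p : pt) : R := 2 * gf p - 1 - e / 2 * W p.
Definition Kforcing (p : pt) : R := (Hf m p - 1) * (1 - e / 2 * W p) * Gf m p.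
Definition monf_slope (p : pt) : R :=
  (- Qf m e p * Kf p - e / 2 * W p * (Hf m p - 1) * (Qf m e p - (Hf m p - 1)))
  / (- Qf m e p * sqrt (- Qf m e p)).

Section Along_curve.
Variables (xi : R -> pt) (t : R).
Hypothesis Hxi : forall i, (i < 8)%nat ->
  is_derive (fun s => coord i (xi s)) t (coord i (vf m e (xi t))).

Ltac derive_step := lazymatch goal with
  | |- is_derive (fun _ => ?c) _ _ => apply is_derive_Rconst
  | |- is_derive (fun s => @?A s + @?B s) _ _ => eapply (is_derive_Rplus A B)
  | |- is_derive (fun s => @?A s - @?B s) _ _ => eapply (is_derive_Rminus A B)
  | |- is_derive (fun s => - @?A s) _ _ => eapply (is_derive_Ropp A)
  | |- is_derive (fun s => @?A s * @?B s) _ _ => eapply (is_derive_Rmult A B)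
  | |- is_derive (fun s => @?A s ^ 2) _ _ => eapply (is_derive_Rsqr A)
  | |- is_derive (fun s => X1 (xi s)) _ _ => exact (Hxi 0 ltac:(lia))
  | |- is_derive (fun s => X2 (xi s)) _ _ => exact (Hxi 1 ltac:(lia))
  | |- is_derive (fun s => X3 (xi s)) _ _ => exact (Hxi 2 ltac:(lia))
  | |- is_derive (fun s => Z1 (xi s)) _ _ => exact (Hxi 3 ltac:(lia))
  | |- is_derive (fun s => Z2 (xi s)) _ _ => exact (Hxi 4 ltac:(lia))
  | |- is_derive (fun s => Z3 (xi s)) _ _ => exact (Hxi 5 ltac:(lia))
  | |- is_derive (fun s => Z4 (xi s)) _ _ => exact (Hxi 6 ltac:(lia))
  | |- is_derive (fun s => W (xi s)) _ _ => exact (Hxi 7 ltac:(lia))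
  end.

Ltac derive_along_curve :=
  eapply is_derive_eq; [unfold Kf, Kcoef, gf, Qf, Gf, Rsf, R1f, R2f, R3f, Hf; repeat derive_step
                       | unfold vf, Kf, Kcoef, Kforcing, gf, Qf, Gf, Rsf, R1f, R2f, R3f, Hf;
                         cbn [coord X1 X2 X3 Z1 Z2 Z3 Z4 W]; field].

Lemma Hf_derive : is_derive (fun s => Hf m (xi s)) t
  ((Hf m (xi t) - 1) * (gf (xi t) - 1) + Qf m e (xi t)).
Proof. derive_along_curve. Qed.

Lemma Qf_derive : is_derive (fun s => Qf m e (xi s)) t
  (2 * Qf m e (xi t) * gf (xi t) + e * W (xi t) * (Hf m (xi t) - 1)).
Proof. derive_along_curve. Qed.

Lemma Kf_derive : is_derive (fun s => Kf (xi s)) t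
  (Kf (xi t) * Kcoef (xi t) + Kforcing (xi t)).
Proof. derive_along_curve. Qed.

Lemma Kcoef_derivable : ex_derive (fun s => Kcoef (xi s)) t.
Proof. eexists. unfold Kcoef, gf, Gf. repeat derive_step. Qed.

Lemma monf_derive : Qf m e (xi t) < 0 ->
  is_derive (fun s => monf m e (xi s)) t (monf_slope (xi t)).
Proof.
  intros HQ.
  assert (Hsq : 0 < sqrt (- Qf m e (xi t))) by (apply sqrt_lt_R0; lra).
  eapply is_derive_eq.
  - apply (is_derive_div (fun s => Hf m (xi s) - 1) (fun s => sqrt (- Qf m e (xi s)))).
    + eapply is_derive_Rminus; [apply Hf_derive | apply is_derive_Rconst].
    + apply (is_derive_sqrt (fun s => - Qf m e (xi s))); [apply is_derive_Ropp, Qf_derive | lra].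
    + lra.
  - unfold monf_slope, Kf.
    set (q := Qf m e (xi t)) in *.
    assert (Hq : q = - (sqrt (- q) * sqrt (- q))) by (rewrite sqrt_sqrt; lra).
    set (r := sqrt (- q)) in *. clearbody r q. rewrite Hq. field. lra.
Qed.

End Along_curve.

Hypothesis He : 0 <= e.

Lemma Gf_nonneg (p : pt) : 0 <= Gf m p.
Proof.
  assert (0 <= INR m) by apply pos_INR. unfold Gf.
  assert (0 <= INR m * X3 p ^ 2) by (apply Rmult_le_pos; [lra | apply pow2_ge_0]).
  pose proof (pow2_ge_0 (X1 p)). pose proof (pow2_ge_0 (X2 p)). lra.
Qed.

Lemma Rsf_nonneg_in_B (p : pt) : inB m e p -> 0 <= Rsf m p.
Proof.
  intros [[_ [_ [_ [H1 [H2 [H3 [H4 H43]]]]]]] [HZ1 [_ [HZ23 _]]]].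
  assert (0 <= INR m) by apply pos_INR.
  (* [Z4^2 = Z2 Z3 >= Z3^2] *)
  assert (HZ43 : Z3 p <= Z4 p) by nra.
  assert (HR1 : 0 <= R1f m p).
  { unfold R1f. assert (0 <= INR m * (Z1 p * Z3 p)) by (apply Rmult_le_pos; nra). nra. }
  assert (HR2 : 0 <= R2f m p).
  { unfold R2f. assert (0 <= INR m * Z3 p) by (apply Rmult_le_pos; lra). nra. }
  assert (HR3 : 0 <= R3f m p).
  { unfold R3f. assert (0 <= INR m * Z4 p) by (apply Rmult_le_pos; lra). nra. }
  unfold Rsf. assert (0 <= INR m * R3f m p) by (apply Rmult_le_pos; lra). lra.
Qed.

Lemma Kforcing_nonpos_in_B (p : pt) : inB m e p -> Kforcing p <= 0.
Proof.
  intros HB. pose proof (Rsf_nonneg_in_B p HB) as HR. pose proof (Gf_nonneg p) as HG.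
  destruct HB as [[HQ [HH [HW _]]] _].
  assert (0 <= INR m) by apply pos_INR.
  assert (HeW : 0 <= e * W p) by (apply Rmult_le_pos; lra).
  assert (0 <= INR m * (e * W p)) by (apply Rmult_le_pos; lra).
  unfold Qf in HQ.
  (* [Q <= 0] forces [e W / 2 <= 1] *)
  assert (0 <= (1 - Hf m p) * (1 - e / 2 * W p)) by (apply Rmult_le_pos; lra).
  unfold Kforcing. nra.
Qed.

Lemma Qf_neg_of_Kf_neg (p : pt) : inRS m e p -> Kf p < 0 -> Qf m e p < 0.
Proof.
  intros [_ [HH [HW _]]] HK. unfold Kf in HK.
  assert (0 <= e / 2 * W p) by (apply Rmult_le_pos; lra). nra.
Qed.

Lemma monf_slope_nonpos (p : pt) : inRS m e p -> Kf p < 0 -> monf_slope p <= 0.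
Proof.
  intros HRS HK. pose proof (Qf_neg_of_Kf_neg p HRS HK) as HQ.
  destruct HRS as [_ [HH [HW _]]].
  assert (HeW : 0 <= e / 2 * W p) by (apply Rmult_le_pos; lra).
  assert (HD : 0 < - Qf m e p * sqrt (- Qf m e p))
    by (apply Rmult_lt_0_compat; [lra | apply sqrt_lt_R0; lra]).
  assert (HN : - Qf m e p * Kf p
               - e / 2 * W p * (Hf m p - 1) * (Qf m e p - (Hf m p - 1)) <= 0).
  { assert (0 <= e / 2 * W p * (1 - Hf m p)) by (apply Rmult_le_pos; lra).
    assert (Qf m e p - (Hf m p - 1) <= Kf p) by (unfold Kf; nra).
    unfold Kf in *. nra. }
  unfold monf_slope, Rdiv. pose proof (Rinv_0_lt_compat _ HD). nra.
Qed.

Section Integral_curve.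
Variables (xi : R -> pt) (T : Rbar).
Hypothesis Hcurve : integral_curve m e xi T.

Lemma Kf_neg_persists_in_B (t0 t2 : R) : t0 <= t2 -> Rbar_lt t2 T ->
  (forall s, t0 <= s <= t2 -> inB m e (xi s)) -> Kf (xi t0) < 0 -> Kf (xi t2) < 0.
Proof.
  intros H02 Ht2 HB HK0.
  apply (linear_ode_preserves_neg (fun s => Kf (xi s)) (fun s => Kcoef (xi s))
           (fun s => Kforcing (xi s)) T t0 t2); try assumption.
  - intros t Ht. exact (Kf_derive xi t (Hcurve t Ht)).
  - intros t Ht. apply (ex_derive_continuous (V := R_NormedModule)).
    exact (Kcoef_derivable xi t (Hcurve t Ht)).
  - intros t Ht. apply Kforcing_nonpos_in_B, HB, Ht.
Qed.

Lemma monf_nonincreasing (t1 t2 : R) : t1 <= t2 -> Rbar_lt t2 T ->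
  (forall s, t1 <= s <= t2 -> inRS m e (xi s) /\ Kf (xi s) < 0) ->
  monf m e (xi t2) <= monf m e (xi t1).
Proof.
  intros H12 Ht2 HK.
  apply (nonincreasing_of_derive_nonpos (fun s => monf m e (xi s)) (fun s => monf_slope (xi s))
           t1 t2 H12).
  - intros s Hs. destruct (HK s Hs) as [HRS HKs].
    apply monf_derive; [apply Hcurve, Rbar_le_lt_trans with t2; [apply Hs | exact Ht2] |].
    apply Qf_neg_of_Kf_neg; assumption.
  - intros s Hs. destruct (HK s Hs) as [HRS HKs]. apply monf_slope_nonpos; assumption.
Qed.

End Integral_curve.

Definition Klin (d : pt) : R :=
  X1 d - 2 * X2 d - 4 * INR m * X3 d + 8 * Z2 d - 8 * INR m * Z3 d
  + 16 * INR m * (INR m + 2) * Z4 d + (4 * INR m + 2) * (e / 2) * W d.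
Definition Kquad (d : pt) : R :=
  X1 d ^ 2 + 2 * X2 d ^ 2 + 4 * INR m * X3 d ^ 2 - 2 * Z1 d * Z2 d
  - 4 * INR m * Z1 d * Z3 d - e / 2 * W d * (X1 d + 2 * X2 d + 4 * INR m * X3 d).

Lemma Kf_split (p : pt) : Kf p = Klin (psub p p0) + Kquad (psub p p0).
Proof.
  unfold Kf, Klin, Kquad, psub, p0, Qf, Gf, Hf, Rsf, R1f, R2f, R3f; cbn [X1 X2 X3 Z1 Z2 Z3 Z4 W]. field.
Qed.

Lemma Klin_padd (p q : pt) : Klin (padd p q) = Klin p + Klin q.
Proof. unfold Klin, padd; cbn [X1 X2 X3 Z1 Z2 Z3 Z4 W]. ring. Qed.

Lemma Klin_pscale (c : R) (p : pt) : Klin (pscale c p) = c * Klin p.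
Proof. unfold Klin, pscale; cbn [X1 X2 X3 Z1 Z2 Z3 Z4 W]. ring. Qed.

Lemma Klin_bound : exists L, 0 <= L /\ forall d, Klin d <= L * pnorm d.
Proof.
  set (c1 := 1); set (c2 := -2); set (c3 := - (4 * INR m)); set (c5 := 8);
  set (c6 := - (8 * INR m)); set (c7 := 16 * INR m * (INR m + 2));
  set (c8 := (4 * INR m + 2) * (e / 2)).
  exists (Rabs c1 + Rabs c2 + Rabs c3 + Rabs c5 + Rabs c6 + Rabs c7 + Rabs c8). split.
  - pose proof (Rabs_pos c1); pose proof (Rabs_pos c2); pose proof (Rabs_pos c3);
    pose proof (Rabs_pos c5); pose proof (Rabs_pos c6); pose proof (Rabs_pos c7);
    pose proof (Rabs_pos c8). lra.
  - intros d.
    pose proof (Rmult_le_Rabs_bound c1 _ _ (Rabs_coord_le_pnorm 0 d)).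
    pose proof (Rmult_le_Rabs_bound c2 _ _ (Rabs_coord_le_pnorm 1 d)).
    pose proof (Rmult_le_Rabs_bound c3 _ _ (Rabs_coord_le_pnorm 2 d)).
    pose proof (Rmult_le_Rabs_bound c5 _ _ (Rabs_coord_le_pnorm 4 d)).
    pose proof (Rmult_le_Rabs_bound c6 _ _ (Rabs_coord_le_pnorm 5 d)).
    pose proof (Rmult_le_Rabs_bound c7 _ _ (Rabs_coord_le_pnorm 6 d)).
    pose proof (Rmult_le_Rabs_bound c8 _ _ (Rabs_coord_le_pnorm 7 d)).
    cbn [coord] in *. unfold Klin, c1, c2, c3, c5, c6, c7, c8 in *. lra.
Qed.

Lemma Kquad_bound : exists A, 0 <= A /\ forall d, Kquad d <= A * pnorm d ^ 2.
Proof.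
  set (c3 := 4 * INR m); set (c4 := -2); set (c5 := - (4 * INR m)); set (c6 := - (e / 2));
  set (c7 := - e); set (c8 := - (2 * e * INR m)).
  exists (1 + 2 + Rabs c3 + Rabs c4 + Rabs c5 + Rabs c6 + Rabs c7 + Rabs c8). split.
  - pose proof (Rabs_pos c3); pose proof (Rabs_pos c4); pose proof (Rabs_pos c5);
    pose proof (Rabs_pos c6); pose proof (Rabs_pos c7); pose proof (Rabs_pos c8). lra.
  - intros d.
    pose proof (Rmult_le_Rabs_bound 1 _ _ (Rabs_coord_mul_le_pnorm 0 0 d)).
    pose proof (Rmult_le_Rabs_bound 2 _ _ (Rabs_coord_mul_le_pnorm 1 1 d)).
    pose proof (Rmult_le_Rabs_bound c3 _ _ (Rabs_coord_mul_le_pnorm 2 2 d)).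
    pose proof (Rmult_le_Rabs_bound c4 _ _ (Rabs_coord_mul_le_pnorm 3 4 d)).
    pose proof (Rmult_le_Rabs_bound c5 _ _ (Rabs_coord_mul_le_pnorm 3 5 d)).
    pose proof (Rmult_le_Rabs_bound c6 _ _ (Rabs_coord_mul_le_pnorm 7 0 d)).
    pose proof (Rmult_le_Rabs_bound c7 _ _ (Rabs_coord_mul_le_pnorm 7 1 d)).
    pose proof (Rmult_le_Rabs_bound c8 _ _ (Rabs_coord_mul_le_pnorm 7 2 d)).
    rewrite Rabs_R1, (Rabs_pos_eq 2) in * by lra.
    cbn [coord] in *. unfold Kquad, c3, c4, c5, c6, c7, c8 in *. lra.
Qed.

Lemma Klin_initial_direction (theta k s4 s5 : R) :
  Klin (padd (wtk m theta k) (padd (pscale s4 w4) (pscale s5 (w5 m e)))) = - s4.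
Proof.
  assert (H1 : Klin (w1 m) = 0) by (unfold Klin, w1; cbn [X1 X2 X3 Z1 Z2 Z3 Z4 W]; ring).
  assert (H2 : Klin w2 = 0) by (unfold Klin, w2; cbn [X1 X2 X3 Z1 Z2 Z3 Z4 W]; ring).
  assert (H3 : Klin (w3 m) = 0) by (unfold Klin, w3; cbn [X1 X2 X3 Z1 Z2 Z3 Z4 W]; field).
  assert (H4 : Klin w4 = -1) by (unfold Klin, w4; cbn [X1 X2 X3 Z1 Z2 Z3 Z4 W]; ring).
  assert (H5 : Klin (w5 m e) = 0) by (unfold Klin, w5; cbn [X1 X2 X3 Z1 Z2 Z3 Z4 W]; field).
  assert (H6 : Klin w6 = 0) by (unfold Klin, w6; cbn [X1 X2 X3 Z1 Z2 Z3 Z4 W]; ring).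
  unfold wtk. rewrite !Klin_padd, !Klin_pscale, H1, H2, H3, H4, H5, H6. ring.
Qed.

Section Near_p0.
Variables (xi : R -> pt) (v : pt) (delta C eta0 : R).
Hypothesis Hdelta : 0 < delta.
Hypothesis Hasym : forall eta, eta <= eta0 -> forall i, (i < 8)%nat ->
  Rabs (coord i (xi eta) - coord i (padd p0 (pscale (exp (2 * eta)) v)))
  <= C * exp ((2 + delta) * eta).

Lemma Kf_asymptotic_bound : exists B1 B2, forall eta, eta <= eta0 -> eta <= 0 ->
  Kf (xi eta) <= exp (2 * eta) * (Klin v + B1 * exp (delta * eta) + B2 * exp (2 * eta)).
Proof.
  destruct Klin_bound as [L [HL0 HL]]. destruct Kquad_bound as [A [HA0 HA]].
  assert (HC : 0 <= C).
  { pose proof (Hasym eta0 (Rle_refl _) 0 ltac:(lia)) as H0.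
    pose proof (Rabs_pos (coord 0 (xi eta0) - coord 0 (padd p0 (pscale (exp (2 * eta0)) v)))).
    pose proof (exp_pos ((2 + delta) * eta0)). nra. }
  exists (8 * L * C), (A * (pnorm v + 8 * C) ^ 2). intros eta Heta0 Heta.
  set (e2 := exp (2 * eta)). set (e1 := exp (delta * eta)).
  assert (He2 : 0 < e2) by apply exp_pos. assert (He1 : 0 < e1) by apply exp_pos.
  assert (He1' : e1 <= 1) by (apply exp_le_one; nra).
  set (err := psub (xi eta) (padd p0 (pscale e2 v))).
  assert (Herr : pnorm err <= 8 * (C * (e2 * e1))).
  { apply pnorm_le_of_coord_bound. intros i Hi. unfold err. rewrite coord_psub.
    unfold e2, e1. rewrite <- exp_plus. replace (2 * eta + delta * eta) with ((2 + delta) * eta)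
      by ring. apply Hasym; assumption. }
  set (d := psub (xi eta) p0).
  assert (Hd : d = padd (pscale e2 v) err) by apply psub_padd_split.
  assert (Hnd : pnorm d <= e2 * (pnorm v + 8 * C)).
  { rewrite Hd. eapply Rle_trans; [apply pnorm_padd_le |].
    rewrite pnorm_pscale, Rabs_pos_eq by lra.
    assert (0 <= C * e2 * (1 - e1)) by (apply Rmult_le_pos; [apply Rmult_le_pos |]; lra).
    lra. }
  assert (Hquad : Kquad d <= A * (e2 * (pnorm v + 8 * C)) ^ 2).
  { eapply Rle_trans; [apply HA |]. apply Rmult_le_compat_l; [exact HA0 |].
    apply pow_incr. split; [apply pnorm_nonneg | exact Hnd]. }
  assert (Hlin : Klin d <= e2 * Klin v + L * (8 * (C * (e2 * e1)))).
  { rewrite Hd, Klin_padd, Klin_pscale.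
    pose proof (HL err). pose proof (Rmult_le_compat_l L _ _ HL0 Herr). lra. }
  rewrite Kf_split. fold d.
  eapply Rle_trans; [apply Rplus_le_compat; [exact Hlin | exact Hquad] | right; ring].
Qed.

Lemma Kf_eventually_neg (s4 : R) : 0 < s4 -> Klin v = - s4 ->
  forall t1, exists t0, t0 <= t1 /\ Kf (xi t0) < 0.
Proof.
  intros Hs4 Hv t1.
  destruct Kf_asymptotic_bound as [B1 [B2 HK]].
  destruct (exp_eventually_small delta B1 (s4 / 2)) as [eta1 H1]; [lra | lra |].
  destruct (exp_eventually_small 2 B2 (s4 / 2)) as [eta2 H2]; [lra | lra |].
  set (eta := Rmin (Rmin eta0 0) (Rmin t1 (Rmin eta1 eta2))).
  assert (Heta : eta <= eta0 /\ eta <= 0 /\ eta <= t1 /\ eta <= eta1 /\ eta <= eta2)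
    by (unfold eta, Rmin; repeat destruct Rle_dec; lra).
  exists eta. split; [tauto |].
  specialize (HK eta ltac:(tauto) ltac:(tauto)). specialize (H1 eta ltac:(tauto)).
  specialize (H2 eta ltac:(tauto)). pose proof (exp_pos (2 * eta)). rewrite Hv in HK. nra.
Qed.

End Near_p0.

End Flow.

Theorem proposition4p7 :
  forall (m : nat), (1 <= m)%nat ->
  forall (k : nat) (theta s4 s5 : R),
    (0 < k)%nat -> 0 <= theta <= PI -> 0 < s4 -> 0 <= s5 ->
  forall (xi : R -> pt) (T : Rbar),
    is_xi m (INR k) theta s4 s5 xi T ->
  forall t1 t2 : R, t1 <= t2 -> Rbar_lt t2 T ->
    (forall s : R, s <= t2 -> inB m (epsof s5) (xi s)) ->
    monf m (epsof s5) (xi t2) <= monf m (epsof s5) (xi t1).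
Proof.
  intros m _ k theta s4 s5 _ _ Hs4 _ xi T [[Hcurve _] Hasym] t1 t2 H12 Ht2 HB.
  set (e := epsof s5) in *.
  assert (He : 0 <= e) by (unfold e, epsof; destruct Rlt_dec; lra).
  destruct Hasym as [delta [C [eta0 [Hdelta [_ Hbound]]]]].
  destruct (Kf_eventually_neg m e xi _ delta C eta0 Hdelta Hbound s4 Hs4
              (Klin_initial_direction m e theta (INR k) s4 s5) t1) as [t0 [Ht01 HK0]].
  apply (monf_nonincreasing m e He xi T Hcurve t1 t2 H12 Ht2).
  intros s Hs. split; [apply HB; lra |].
  apply (Kf_neg_persists_in_B m e He xi T Hcurve t0 s); [lra | | | exact HK0].
  - apply Rbar_le_lt_trans with t2; [apply Hs | exact Ht2].
  - intros u Hu. apply HB. lra.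
Qed.
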